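(* For all $\Sigma\subseteq\mathsf{FOR}$ and $\varphi\in\mathsf{FOR}$: $\Sigma\vdash_{\mathcal{F}S}\varphi$ if and only if $\Sigma\vDash_{\mathsf{R}^s}\varphi$, where $\mathsf{R}^s$ is the set of all symmetric Epstein relations. In particular every theorem of $\mathcal{F}S$ is valid on every symmetric relation.
   Context: Language: propositional letters $\Phi=\{p_0,p_1,\dots\}$; connectives $\neg$, $\lor,\wedge,\to,\leftrightarrow,\vartriangle,\looparrowright$; $\mathsf{FOR}$ the set of all formulas. An Epstein model is $\langle v,\mathfrak{R}\rangle$ with $v:\Phi\to\{0,1\}$ and $\mathfrak{R}\subseteq\mathsf{FOR}^2$ (an Epstein relation); truth: letters via $v$, boolean connectives classical, $\langle v,\mathfrak{R}\rangle\vDash\varphi\vartriangle\psi$ iff both true and $\langle\varphi,\psi\rangle\in\mathfrak{R}$; $\langle v,\mathfrak{R}\rangle\vDash\varphi\looparrowright\psi$ iff $\varphi\to\psi$ true and $\langle\varphi,\psi\rangle\in\mathfrak{R}$. For a set $\mathsf{R}$ of relations, $\Sigma\vDash_{\mathsf{R}}\varphi$ iff for every $\mathfrak{R}\in\mathsf{R}$ and every valuation $v$, if $\langle v,\mathfrak{R}\rangle$ satisfies all of $\Sigma$ then it satisfies $\varphi$. $\mathcal{F}$ is the least set containing all classical tautologies of the language (substitution instances of propositional tautologies) and the axioms $(p\looparrowright q)\to(p\to q)$ and $(p\vartriangle q)\leftrightarrow((p\looparrowright q)\wedge(p\wedge q))$, closed under uniform substitution and modus ponens. $\mathcal{F}S$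 is the least set containing $\mathcal{F}$ and the axiom $(s)\ (p\looparrowright q)\to((q\looparrowright p)\lor\neg(q\to p))$ ($p,q$ distinct letters), closed under uniform substitution and modus ponens. $\Sigma\vdash_{\mathcal{F}S}\varphi$ iff there is a finite sequence ending in $\varphi$ each member of which is in $\mathcal{F}S\cup\Sigma$ or follows from two earlier members by modus ponens. *)

From Stdlib Require Import List Arith.
Import ListNotations.

Inductive form : Type :=
| Var : nat -> form
| Neg : form -> form
| Or  : form -> form -> form
| And : form -> form -> form
| Imp : form -> form -> form
| Iff : form -> form -> form
| Tri : form -> form -> form
| Loop : form -> form -> form.

Definition relation := form -> form -> Prop.

Definition symmetric_rel (R : relation) : Prop :=
  forall phi psi, R phi psi -> R psi phi.

Fixpoint sat (v : nat -> bool) (R : relation) (f : form) : Prop :=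
  match f with
  | Var n => v n = true
  | Neg a => ~ sat v R a
  | Or a b => sat v R a \/ sat v R b
  | And a b => sat v R a /\ sat v R b
  | Imp a b => sat v R a -> sat v R b
  | Iff a b => (sat v R a <-> sat v R b)
  | Tri a b => sat v R a /\ sat v R b /\ R a b
  | Loop a b => (sat v R a -> sat v R b) /\ R a b
  end.

Definition consequence (Rset : relation -> Prop) (Sigma : form -> Prop) (phi : form) : Prop :=
  forall R, Rset R -> forall v : nat -> bool,
    (forall s, Sigma s -> sat v R s) -> sat v R phi.

Definition Rs : relation -> Prop := symmetric_rel.

Fixpoint subst (s : nat -> form) (f : form) : form :=
  match f with
  | Var n => s n
  | Neg a => Neg (subst s a)
  | Or a b => Or (subst s a) (subst s b)
  | And a b => And (subst s a) (subst s b)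
  | Imp a b => Imp (subst s a) (subst s b)
  | Iff a b => Iff (subst s a) (subst s b)
  | Tri a b => Tri (subst s a) (subst s b)
  | Loop a b => Loop (subst s a) (subst s b)
  end.

Fixpoint boolean (f : form) : Prop :=
  match f with
  | Var _ => True
  | Neg a => boolean a
  | Or a b | And a b | Imp a b | Iff a b => boolean a /\ boolean b
  | Tri _ _ | Loop _ _ => False
  end.

Fixpoint beval (v : nat -> bool) (f : form) : bool :=
  match f with
  | Var n => v n
  | Neg a => negb (beval v a)
  | Or a b => beval v a || beval v b
  | And a b => beval v a && beval v b
  | Imp a b => implb (beval v a) (beval v b)
  | Iff a b => Bool.eqb (beval v a) (beval v b)
  | Tri _ _ | Loop _ _ => false
  end.

Definition prop_tautology (f : form) : Prop :=
  boolean f /\ forall v, beval v f = true.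

Definition classical_tautology (f : form) : Prop :=
  exists t s, prop_tautology t /\ f = subst s t.

Definition p : form := Var 0.
Definition q : form := Var 1.

Definition axF1 : form := Imp (Loop p q) (Imp p q).
Definition axF2 : form := Iff (Tri p q) (And (Loop p q) (And p q)).
Definition axS : form := Imp (Loop p q) (Or (Loop q p) (Neg (Imp q p))).

Inductive inF : form -> Prop :=
| F_taut : forall f, classical_tautology f -> inF f
| F_ax1 : inF axF1
| F_ax2 : inF axF2
| F_subst : forall s f, inF f -> inF (subst s f)
| F_mp : forall a b, inF (Imp a b) -> inF a -> inF b.

Inductive inFS : form -> Prop :=
| FS_F : forall f, inF f -> inFS f
| FS_s : inFS axS
| FS_subst : forall s f, inFS f -> inFS (subst s f)
| FS_mp : forall a b, inFS (Imp a b) -> inFS a -> inFS b.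

Definition is_derivation (Sigma : form -> Prop) (l : list form) : Prop :=
  forall i, i < length l ->
    let x := nth i l (Var 0) in
    inFS x \/ Sigma x \/
    exists j k, j < i /\ k < i /\ nth k l (Var 0) = Imp (nth j l (Var 0)) x.

Definition derivable_FS (Sigma : form -> Prop) (phi : form) : Prop :=
  exists l, is_derivation Sigma (l ++ [phi]).

(* Soundness is an induction on derivations; for axiom (s) symmetry of the
   relation is exactly what is needed.  For completeness, extend a set Sigma
   not proving phi to a maximal such set G (Lindenbaum).  G is a theory that
   decides every formula, and in the model whose valuation is membership of
   letters in G and whose relation is
     R_G a b  :=  (a ~> b) \in G  \/  (b ~> a) \in G
   (symmetric by construction) truth coincides with membership in G.  The only
   nontrivial clause is the one for ~>, where axiom (s) shows that
   (b ~> a) \in G together with (a -> b) \in G already forces (a ~> b) \in G.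
   So G, hence Sigma, holds in a symmetric model where phi fails. *)
From Stdlib Require Import List Arith Lia Classical ClassicalEpsilon.
Import ListNotations.

Definition holds (P : Prop) : bool :=
  if excluded_middle_informative P then true else false.

Lemma holds_true (P : Prop) : holds P = true <-> P.
Proof.
  unfold holds; destruct (excluded_middle_informative P); split; intros; tauto || discriminate.
Qed.

(** * Soundness *)

Lemma sat_subst (s : nat -> form) v (R : relation) f :
  sat v R (subst s f) <->
  sat (fun n => holds (sat v R (s n))) (fun a b => R (subst s a) (subst s b)) f.
Proof.
  induction f; simpl; rewrite ?IHf, ?IHf1, ?IHf2, ?holds_true; tauto.
Qed.

Lemma sat_boolean v (R : relation) t : boolean t -> (sat v R t <-> beval v t = true).
Proof.
  induction t; simpl; intros Ht; try tauto;
    rewrite ?IHt, ?IHt1, ?IHt2 by tauto;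
    repeat match goal with |- context [beval v ?a] => destruct (beval v a) end;
    simpl; intuition discriminate.
Qed.

Lemma inF_valid f : inF f -> forall (R : relation) v, sat v R f.
Proof.
  induction 1 as [f [t [s [[Ht Hv] ->]]] | | | s f _ IH | a b _ IHab _ IHa];
    intros R v; simpl; try tauto.
  - apply sat_subst, sat_boolean; auto.
  - apply sat_subst, IH.
  - apply IHab, IHa.
Qed.

Lemma inFS_valid f : inFS f -> forall R, symmetric_rel R -> forall v, sat v R f.
Proof.
  induction 1 as [f Hf | | s f _ IH | a b _ IHab _ IHa]; intros R HR v.
  - apply inF_valid; auto.
  - simpl; intros [_ Hpq].
    destruct (classic (v 1 = true -> v 0 = true)); [left | right]; auto.
  - apply sat_subst, IH; intros a b; apply HR.
  - apply (IHab R HR v), IHa; auto.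
Qed.

Inductive proves (Sigma : form -> Prop) : form -> Prop :=
| proves_thm f : inFS f -> proves Sigma f
| proves_hyp f : Sigma f -> proves Sigma f
| proves_mp a b : proves Sigma (Imp a b) -> proves Sigma a -> proves Sigma b.

Lemma proves_sound Sigma f : proves Sigma f -> consequence Rs Sigma f.
Proof.
  induction 1 as [f Hf | f Hf | a b _ IHab _ IHa]; intros R HR v HSigma.
  - apply inFS_valid; auto.
  - auto.
  - apply (IHab R HR v HSigma), (IHa R HR v HSigma).
Qed.

Lemma is_derivation_proves Sigma l :
  is_derivation Sigma l -> forall i, i < length l -> proves Sigma (nth i l (Var 0)).
Proof.
  intros Hl i; induction i as [i IH] using lt_wf_ind; intros Hi.
  destruct (Hl i Hi) as [H | [H | [j [k [Hj [Hk E]]]]]].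
  - apply proves_thm; auto.
  - apply proves_hyp; auto.
  - apply proves_mp with (nth j l (Var 0)); [rewrite <- E |]; apply IH; lia.
Qed.

Lemma derivable_proves Sigma phi : derivable_FS Sigma phi -> proves Sigma phi.
Proof.
  intros [l Hl].
  pose proof (is_derivation_proves Sigma _ Hl (length l)) as H.
  rewrite app_nth2, Nat.sub_diag in H by lia.
  apply H; rewrite length_app; simpl; lia.
Qed.

Lemma is_derivation_app Sigma l1 l2 :
  is_derivation Sigma l1 -> is_derivation Sigma l2 -> is_derivation Sigma (l1 ++ l2).
Proof.
  intros H1 H2 i Hi; rewrite length_app in Hi.
  destruct (Nat.lt_ge_cases i (length l1)) as [Hi1 | Hi1].
  - rewrite !app_nth1 by auto.
    destruct (H1 i Hi1) as [A | [A | [j [k [Hj [Hk E]]]]]]; auto.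
    right; right; exists j, k; rewrite !app_nth1 by lia; auto.
  - rewrite app_nth2 by auto.
    destruct (H2 (i - length l1)) as [A | [A | [j [k [Hj [Hk E]]]]]]; try lia; auto.
    right; right; exists (j + length l1), (k + length l1).
    rewrite !app_nth2, !Nat.add_sub by lia; repeat split; auto; lia.
Qed.

Lemma is_derivation_rcons Sigma l f :
  is_derivation Sigma l ->
  (inFS f \/ Sigma f \/ exists j k, j < length l /\ k < length l /\
                                    nth k l (Var 0) = Imp (nth j l (Var 0)) f) ->
  is_derivation Sigma (l ++ [f]).
Proof.
  intros Hl Hf i Hi; rewrite length_app in Hi; simpl in Hi.
  destruct (Nat.lt_ge_cases i (length l)) as [Hil | Hil].
  - rewrite !app_nth1 by auto.
    destruct (Hl i Hil) as [A | [A | [j [k [Hj [Hk E]]]]]]; auto.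
    right; right; exists j, k; rewrite !app_nth1 by lia; auto.
  - replace i with (length l) by lia; rewrite app_nth2, Nat.sub_diag by lia; simpl.
    destruct Hf as [A | [A | [j [k [Hj [Hk E]]]]]]; auto.
    right; right; exists j, k; rewrite !app_nth1 by lia; auto.
Qed.

Lemma is_derivation_nil Sigma : is_derivation Sigma [].
Proof. intros i Hi; simpl in Hi; lia. Qed.

Lemma proves_derivable Sigma phi : proves Sigma phi -> derivable_FS Sigma phi.
Proof.
  induction 1 as [f Hf | f Hf | a b _ [l1 H1] _ [l2 H2]].
  1, 2: exists []; apply is_derivation_rcons; auto using is_derivation_nil.
  exists ((l1 ++ [Imp a b]) ++ (l2 ++ [a])).
  apply is_derivation_rcons; [apply is_derivation_app; auto |].
  right; right; exists (length ((l1 ++ [Imp a b]) ++ l2)), (length l1).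
  repeat split; [rewrite !length_app; simpl; lia .. |].
  rewrite app_assoc, nth_middle, <- !app_assoc; simpl.
  rewrite nth_middle; reflexivity.
Qed.

Definition extend (G : form -> Prop) (f : form) : form -> Prop := fun y => G y \/ y = f.

Lemma proves_weaken (G H : form -> Prop) f :
  (forall x, G x -> H x) -> proves G f -> proves H f.
Proof.
  intros GH; induction 1; [apply proves_thm | apply proves_hyp | eapply proves_mp]; eauto.
Qed.

Definition subst3 (a b c : form) : nat -> form :=
  fun n => match n with 0 => a | 1 => b | _ => c end.

Lemma inFS_taut3 t a b c :
  boolean t -> (forall v, beval v t = true) -> inFS (subst (subst3 a b c) t).
Proof.
  intros Ht Hv; apply FS_F, F_taut; exists t, (subst3 a b c); repeat split; auto.
Qed.

Ltac taut t a b c :=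
  apply proves_thm; apply (inFS_taut3 t a b c);
  [ simpl; tauto
  | let v := fresh "v" in intro v; simpl; destruct (v 0), (v 1), (v 2); reflexivity ].

Lemma proves_deduction G a b : proves (extend G a) b -> proves G (Imp a b).
Proof.
  induction 1 as [f Hf | f [Hf | ->] | c d _ IHcd _ IHc].
  - eapply proves_mp; [taut (Imp (Var 0) (Imp (Var 1) (Var 0))) f a a | apply proves_thm; auto].
  - eapply proves_mp; [taut (Imp (Var 0) (Imp (Var 1) (Var 0))) f a a | apply proves_hyp; auto].
  - taut (Imp (Var 0) (Var 0)) a a a.
  - eapply proves_mp; [eapply proves_mp; [| exact IHcd] | exact IHc].
    taut (Imp (Imp (Var 0) (Imp (Var 1) (Var 2)))
              (Imp (Imp (Var 0) (Var 1)) (Imp (Var 0) (Var 2)))) a c d.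
Qed.

(** * Lindenbaum's lemma *)

Fixpoint levels (n : nat) : list form :=
  match n with
  | 0 => [Var 0]
  | S m =>
      levels m ++ Var (S m) ::
        flat_map (fun a => Neg a :: flat_map (fun b =>
          [Or a b; And a b; Imp a b; Iff a b; Tri a b; Loop a b]) (levels m)) (levels m)
  end.

Lemma levels_prefix n m : n <= m -> exists l, levels m = levels n ++ l.
Proof.
  induction 1 as [| m _ [l E]]; [exists []; symmetry; apply app_nil_r |].
  simpl; rewrite E, <- app_assoc; eauto.
Qed.

Lemma in_levels_mono n m f : n <= m -> In f (levels n) -> In f (levels m).
Proof. intros Hnm Hf; destruct (levels_prefix n m Hnm) as [l ->]; apply in_or_app; auto. Qed.

Lemma in_levels f : exists n, In f (levels n).
Proof.
  induction f; [| destruct IHf as [n H] | destruct IHf1 as [n1 H1], IHf2 as [n2 H2] ..].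
  1: destruct n; [exists 0; simpl; auto |].
  1: exists (S n); simpl; apply in_or_app; right; left; auto.
  1: exists (S n); simpl; apply in_or_app; right; right;
       apply in_flat_map; exists f; simpl; auto.
  all: exists (S (max n1 n2)); simpl; apply in_or_app; right; right;
    apply in_flat_map; exists f1; split; [apply (in_levels_mono n1); [lia | auto] |];
    right; apply in_flat_map; exists f2; split; [apply (in_levels_mono n2); [lia | auto] |];
    simpl; tauto.
Qed.

Section Lindenbaum.

Variable phi : form.

Definition add_if_unproving (G : form -> Prop) (f : form) : form -> Prop :=
  fun x => G x \/ (x = f /\ ~ proves (extend G f) phi).

Lemma fold_add_incl l G x : G x -> fold_left add_if_unproving l G x.
Proof. revert G; induction l; simpl; auto; intros G Hx; apply IHl; left; auto. Qed.

Lemma fold_add_unproving l G : ~ proves G phi -> ~ proves (fold_left add_if_unproving l G) phi.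
Proof.
  revert G; induction l as [| f l IH]; simpl; auto; intros G HG; apply IH.
  destruct (classic (proves (extend G f) phi)) as [Hf | Hf]; intros D.
  - apply HG; eapply proves_weaken; [| exact D]; intros x [Hx | [_ Hx]]; tauto.
  - apply Hf; eapply proves_weaken; [| exact D]; intros x [Hx | [Hx _]]; red; auto.
Qed.

Lemma fold_add_decides l G f : In f l ->
  fold_left add_if_unproving l G f \/ proves (extend (fold_left add_if_unproving l G) f) phi.
Proof.
  revert G; induction l as [| g l IH]; simpl; [tauto |]; intros G [-> | Hf]; auto.
  destruct (classic (proves (extend G f) phi)) as [D | D].
  - right; eapply proves_weaken; [| exact D].
    intros x [Hx | Hx]; [left; apply fold_add_incl; left; exact Hx | right; exact Hx].
  - left; apply fold_add_incl; right; auto.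
Qed.

Variable Sigma : form -> Prop.

Definition stage (n : nat) : form -> Prop := fold_left add_if_unproving (levels n) Sigma.

Definition lindenbaum : form -> Prop := fun x => exists n, stage n x.

Lemma stage_mono n m x : n <= m -> stage n x -> stage m x.
Proof.
  intros Hnm; unfold stage; destruct (levels_prefix n m Hnm) as [l ->].
  rewrite fold_left_app; apply fold_add_incl.
Qed.

Lemma proves_lindenbaum_stage f : proves lindenbaum f -> exists n, proves (stage n) f.
Proof.
  induction 1 as [f Hf | f [n Hf] | a b _ [n1 H1] _ [n2 H2]].
  - exists 0; apply proves_thm; auto.
  - exists n; apply proves_hyp; auto.
  - exists (max n1 n2); eapply proves_mp;
      (eapply proves_weaken; [| eauto]); intros x; apply stage_mono; lia.
Qed.

Lemma lindenbaum_unproving : ~ proves Sigma phi -> ~ proves lindenbaum phi.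
Proof.
  intros HSigma D; destruct (proves_lindenbaum_stage _ D) as [n Dn].
  exact (fold_add_unproving _ _ HSigma Dn).
Qed.

Lemma lindenbaum_decides f : lindenbaum f \/ proves (extend lindenbaum f) phi.
Proof.
  destruct (in_levels f) as [n Hn].
  destruct (fold_add_decides _ Sigma f Hn) as [H | H]; [left; exists n; exact H |].
  right; eapply proves_weaken; [| exact H].
  intros x [Hx | Hx]; [left; exists n; exact Hx | right; exact Hx].
Qed.

End Lindenbaum.

(** * Maximal sets and the canonical model *)

Definition maximal (phi : form) (G : form -> Prop) : Prop :=
  ~ proves G phi /\ forall f, G f \/ proves (extend G f) phi.

Definition canonical_rel (G : form -> Prop) : relation :=
  fun a b => G (Loop a b) \/ G (Loop b a).

Lemma canonical_rel_symmetric G : symmetric_rel (canonical_rel G).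
Proof. intros a b [H | H]; [right | left]; exact H. Qed.

Section Maximal.

Variables (phi : form) (G : form -> Prop).
Hypothesis HG : maximal phi G.

Lemma maximal_closed x : proves G x -> G x.
Proof.
  intros D; destruct (proj2 HG x) as [| Dx]; auto.
  exfalso; apply (proj1 HG); exact (proves_mp _ _ _ (proves_deduction _ _ _ Dx) D).
Qed.

Lemma maximal_thm x : inFS x -> G x.
Proof. intros H; apply maximal_closed, proves_thm, H. Qed.

Lemma maximal_mp a b : G (Imp a b) -> G a -> G b.
Proof. intros Hab Ha; apply maximal_closed; eapply proves_mp; apply proves_hyp; eauto. Qed.

Lemma maximal_taut2 t a b :
  boolean t -> (forall v, beval v t = true) -> G (subst (subst3 a b a) t).
Proof. intros Ht Hv; apply maximal_thm, inFS_taut3; auto. Qed.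

Ltac taut2 t := apply (maximal_taut2 t);
  [ simpl; tauto | let v := fresh "v" in intro v; simpl; destruct (v 0), (v 1); reflexivity ].

Lemma maximal_neg a : G (Neg a) <-> ~ G a.
Proof.
  split.
  - intros Hn Ha; apply (proj1 HG).
    apply proves_hyp, (maximal_mp a); auto; apply (maximal_mp (Neg a)); auto.
    taut2 (Imp (Neg (Var 0)) (Imp (Var 0) (Var 1))).
  - intros Ha; apply NNPP; intros Hn; apply (proj1 HG).
    destruct (proj2 HG a) as [| Da]; [tauto |].
    destruct (proj2 HG (Neg a)) as [| Dn]; [tauto |].
    apply proves_deduction in Da, Dn.
    eapply proves_mp; [eapply proves_mp; [| exact Da] | exact Dn].
    taut (Imp (Imp (Var 0) (Var 1)) (Imp (Imp (Neg (Var 0)) (Var 1)) (Var 1))) a phi a.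
Qed.

Lemma maximal_imp a b : G (Imp a b) <-> (G a -> G b).
Proof.
  split; [apply maximal_mp |]; intros H.
  destruct (classic (G a)) as [Ha | Ha].
  - apply (maximal_mp b); [taut2 (Imp (Var 1) (Imp (Var 0) (Var 1))) | auto].
  - apply (maximal_mp (Neg a)); [taut2 (Imp (Neg (Var 0)) (Imp (Var 0) (Var 1))) |].
    apply maximal_neg; auto.
Qed.

Lemma maximal_and a b : G (And a b) <-> G a /\ G b.
Proof.
  split.
  - intros H; split; apply (maximal_mp (And a b)); auto.
    + taut2 (Imp (And (Var 0) (Var 1)) (Var 0)).
    + taut2 (Imp (And (Var 0) (Var 1)) (Var 1)).
  - intros [Ha Hb]; apply (maximal_mp b); auto; apply (maximal_mp a); auto.
    taut2 (Imp (Var 0) (Imp (Var 1) (And (Var 0) (Var 1)))).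
Qed.

Lemma maximal_or a b : G (Or a b) <-> G a \/ G b.
Proof.
  split.
  - intros H; destruct (classic (G a)) as [Ha | Ha]; auto; right.
    apply (maximal_mp (Neg a)); [| apply maximal_neg; auto].
    apply (maximal_mp (Or a b)); auto.
    taut2 (Imp (Or (Var 0) (Var 1)) (Imp (Neg (Var 0)) (Var 1))).
  - intros [H | H]; eapply maximal_mp; eauto.
    + taut2 (Imp (Var 0) (Or (Var 0) (Var 1))).
    + taut2 (Imp (Var 1) (Or (Var 0) (Var 1))).
Qed.

Lemma maximal_iff a b : G (Iff a b) <-> (G a <-> G b).
Proof.
  transitivity (G (And (Imp a b) (Imp b a))).
  - split; intros H; eapply maximal_mp; eauto.
    + taut2 (Imp (Iff (Var 0) (Var 1)) (And (Imp (Var 0) (Var 1)) (Imp (Var 1) (Var 0)))).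
    + taut2 (Imp (And (Imp (Var 0) (Var 1)) (Imp (Var 1) (Var 0))) (Iff (Var 0) (Var 1))).
  - rewrite maximal_and, !maximal_imp; tauto.
Qed.

Lemma maximal_loop a b : G (Loop a b) <-> (G a -> G b) /\ canonical_rel G a b.
Proof.
  split.
  - intros H; split; [| left; exact H].
    apply maximal_imp, (maximal_mp (Loop a b)); auto.
    apply maximal_thm, FS_F, (F_subst (subst3 a b a) _ F_ax1).
  - intros [Hab [H | H]]; auto.
    (* axiom (s) for (b, a): from b ~> a and a -> b infer a ~> b *)
    pose proof (maximal_mp _ _ (maximal_thm _ (FS_subst (subst3 b a b) _ FS_s)) H) as Hs.
    simpl in Hs; apply maximal_or in Hs as [Hs | Hs]; auto.
    apply maximal_neg in Hs; exfalso; apply Hs, maximal_imp, Hab.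
Qed.

Lemma maximal_tri a b : G (Tri a b) <-> G a /\ G b /\ canonical_rel G a b.
Proof.
  pose proof (maximal_thm _ (FS_F _ (F_subst (subst3 a b a) _ F_ax2))) as H.
  simpl in H; rewrite maximal_iff, !maximal_and, maximal_loop in H; rewrite H; tauto.
Qed.

Lemma maximal_sat f : sat (fun n => holds (G (Var n))) (canonical_rel G) f <-> G f.
Proof.
  induction f; simpl;
    rewrite ?IHf, ?IHf1, ?IHf2, ?holds_true, ?maximal_neg, ?maximal_or, ?maximal_and,
      ?maximal_imp, ?maximal_iff, ?maximal_tri, ?maximal_loop; tauto.
Qed.

End Maximal.

Lemma proves_complete Sigma phi : consequence Rs Sigma phi -> proves Sigma phi.
Proof.
  intros C; apply NNPP; intros N.
  assert (M : maximal phi (lindenbaum phi Sigma))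
    by (split; [apply lindenbaum_unproving | apply lindenbaum_decides]; auto).
  apply (proj1 M), proves_hyp, (maximal_sat _ _ M).
  apply C; [apply canonical_rel_symmetric |].
  intros s Hs; apply (maximal_sat _ _ M); exists 0; apply fold_add_incl, Hs.
Qed.

Theorem mainTheorem16 :
  (forall (Sigma : form -> Prop) (phi : form),
      derivable_FS Sigma phi <-> consequence Rs Sigma phi) /\
  (forall phi : form, inFS phi ->
      forall R : relation, symmetric_rel R -> forall v : nat -> bool, sat v R phi).
Proof.
  split.
  - intros Sigma phi; split; intros H.
    + apply proves_sound, derivable_proves, H.
    + apply proves_derivable, proves_complete, H.
  - exact inFS_valid.
Qed.
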